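(* Let $k \in \mathbb{Z}_{\geq 0}$ and let $\gamma_X = (X, d_X(\cdot))$ be a $(2k+2)$-DMS. Put $\mathbb{V} = H_k(\mathcal{R}^{\mathrm{lev}}(\gamma_X)) : \mathbf{Dyn} \to \mathbf{Vec}$. Then for any $p, q \in \operatorname{supp} \mathbb{V}$ with $p \leq q$, we have $\mathcal{R}^{\mathrm{lev}}(\gamma_X)(p) = \mathcal{R}^{\mathrm{lev}}(\gamma_X)(q)$ as abstract simplicial complexes, and the structure map $\mathbb{V}(p \leq q)$ is an isomorphism.
   Context: A dynamic metric space (DMS) $\gamma_X = (X, d_X(\cdot))$ is a finite set $X$ with a function $d_X : \mathbb{R} \times X \times X \to \mathbb{R}_{\geq 0}$ such that for each $t$, $d_X(t)$ is a pseudometric on $X$, and for each $x,x'$ the map $t \mapsto d_X(t)(x,x')$ is continuous. An $n$-DMS is a DMS with $|X| = n$. For a compact interval $I \subset \mathbb{R}$, $d_X(I)(x,x') := \inf_{t \in I} d_X(t)(x,x')$; this is a semimetric (symmetric, zero on the diagonal). For a semimetric $d$ on $X$ and $\delta \geq 0$, the Rips complex $\mathcal{R}_\delta(d)$ is the abstract simplicial complex on $X$ whose simplices are the finite nonempty $\sigma \subseteq X$ with $d(x,y) \leq \delta$ for all $x,y \in \sigma$. $\mathbf{Dyn}$ is the poset of pairs $(I,\delta)$ with $I$ a compact interval of $\mathbb{R}$ and $\delta \ge 0$, ordered by $(I,\delta) \leq (I',\delta')$ iff $I \subseteq I'$ and $\delta \leq \delta'$. The spatiotemporal Rips filtration $\mathcal{R}^{\mathrm{lev}}(\gamma_X)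 : \mathbf{Dyn} \to \mathbf{Simp}$ sends $(I,\delta)$ to $\mathcal{R}_\delta(d_X(I))$ and relations to inclusions; $H_k(\mathcal{R}^{\mathrm{lev}}(\gamma_X))$ is its composition with degree-$k$ simplicial homology over a fixed field $\mathbb{F}$. For such a $(2k+2)$-DMS, each $\mathbb{V}(p)$ has dimension $0$ or $1$, and $\operatorname{supp}\mathbb{V} := \{p \in \mathbf{Dyn} : \mathbb{V}(p) \cong \mathbb{F}\}$. *)

From HB Require Import structures.
From mathcomp Require Import all_boot all_order all_algebra.
From mathcomp Require Import all_classical all_reals all_analysis.

Set Implicit Arguments.
Unset Strict Implicit.
Unset Printing Implicit Defensive.

Import Order.TTheory GRing.Theory Num.Theory.
Import numFieldNormedType.Exports.
Local Open Scope ring_scope.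

Definition is_pseudometric (R : realType) (T : finType) (m : T -> T -> R) :=
  [/\ forall x y, 0 <= m x y,
      forall x, m x x = 0,
      forall x y, m x y = m y x &
      forall x y z, m x z <= m x y + m y z].

Definition isDMS (R : realType) (T : finType) (d : R -> T -> T -> R) :=
  (forall t, is_pseudometric (d t)) /\
  (forall x y, continuous (fun t : R => d t x y)).

Definition dI (R : realType) (T : finType) (d : R -> T -> T -> R)
  (a b : R) (x y : T) : R :=
  inf [set d t x y | t in `[a, b]%classic].

(* Rips complex: an abstract simplicial complex on T is represented    *)
(* by its set of simplices (nonempty subsets of T).                    *)

Definition rips (R : realType) (T : finType) (m : T -> T -> R) (delta : R)
  : {set {set T}} :=
  [set s : {set T} | (s != finset.set0) &&
     [forall x in s, forall y in s, `[< m x y <= delta >]]].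

(* The spatiotemporal Rips filtration at (I, delta) with I = [a, b]. *)
Definition Rlev (R : realType) (T : finType) (d : R -> T -> T -> R)
  (a b delta : R) : {set {set T}} :=
  rips (dI d a b) delta.

(* All chain groups live in the ambient F-vector space                 *)
(* {ffun {set T} -> F} (formal combinations of subsets of T).          *)
(* Orientation: simplices are ordered by enum_rank on T.               *)

Section Homology.
Variables (F : fieldType) (T : finType).

Definition chainT := {ffun {set T} -> F^o}.

Definition delta_ch (s : {set T}) : chainT := [ffun u => (u == s)%:R].

(* Incidence coefficient [s : u] of the simplicial boundary: nonzero iff
   u is a face of s of codimension one, u nonempty (unreduced homology);
   sign (-1)^i where i is the position of the removed vertex in s. *)
Definition incid (s u : {set T}) : F :=
  if [&& u \subset s, #|s :\: u| == 1%N & u != finset.set0]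
  then (-1) ^+ (\sum_(x in s :\: u)
                  #|[set y in s | (enum_rank y < enum_rank x)%N]|)
  else 0.

Definition bd_fun (c : chainT) : chainT :=
  [ffun u => \sum_(s : {set T}) c s * incid s u].

Definition bd : 'End(chainT) := linfun bd_fun.

Definition chains (k : nat) (K : {set {set T}}) : {vspace chainT} :=
  <<[seq delta_ch s | s <- enum [set s in K | #|s| == k.+1]]>>%VS.

Definition cycles (k : nat) (K : {set {set T}}) : {vspace chainT} :=
  (chains k K :&: lker bd)%VS.

Definition boundaries (k : nat) (K : {set {set T}}) : {vspace chainT} :=
  (bd @: chains k.+1 K)%VS.

(* dim H_k(K) = dim Z_k(K) - dim B_k(K)  (B_k(K) is a subspace of Z_k(K)). *)
Definition homology_dim (k : nat) (K : {set {set T}}) : nat :=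
  (\dim (cycles k K) - \dim (boundaries k K))%N.

(* For K a subcomplex of L, the map H_k(K) -> H_k(L), [z] |-> [z],
   induced by inclusion is an isomorphism: it is injective
   (a cycle of K bounding in L bounds in K) and surjective
   (every cycle of L is homologous in L to a cycle of K). *)
Definition induced_iso (k : nat) (K L : {set {set T}}) : bool :=
  (cycles k K :&: boundaries k L <= boundaries k K)%VS &&
  (cycles k L <= cycles k K + boundaries k L)%VS.

End Homology.

(* Both Rips complexes are flag complexes of graphs E <= E' on the 2k+2
   points.  Coning off a vertex v is a chain null-homotopy, and splitting a
   cycle into its part avoiding v and a cone over its link part shows that
   H_j vanishes once it vanishes for the deletion of v in degree j and for
   the link of v in degree j-1; by induction a flag complex on at most 2j+1
   vertices has H_j = 0.  So if H_k is nonzero on 2k+2 vertices (k >= 1), no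
   vertex is adjacent to all others (the complex would be a cone) and no
   vertex has two non-neighbours (its link would have at most 2k-1 vertices
   and its deletion 2k+1).  Hence every vertex has exactly one non-neighbour
   in E; it also has one in E', which is a non-neighbour in E, so E = E'.
   For k = 0, dim H_0 = 1 forces the two points to be adjacent.  Equal
   complexes make the structure map the identity. *)
From HB Require Import structures.
From mathcomp Require Import all_boot all_order all_algebra.
From mathcomp Require Import all_classical all_reals all_analysis.
From mathcomp Require Import zify.
Import Order.TTheory GRing.Theory Num.Theory.
Local Open Scope ring_scope.
Set Implicit Arguments.
Unset Strict Implicit.
Unset Printing Implicit Defensive.

Section Chains.
Variables (F : fieldType) (T : finType).
Local Notation chain := (chainT F T).
Local Notation basis := (@delta_ch F T).

(** * Augmented chains, cones and the cone homotopy *)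

Lemma scale_regE (a : F) (b : F^o) : a *: b = a * b. Proof. by []. Qed.

Lemma basisE s u : basis s u = if u == s then 1 else 0.
Proof. by rewrite ffunE; case: eqP. Qed.

Lemma chainE (c : chain) : c = \sum_(s : {set T}) c s *: basis s.
Proof.
apply/ffunP=> u; rewrite sum_ffunE (bigD1 u) //= big1 => [|s su].
  by rewrite !ffunE eqxx scale_regE mulr1 addr0.
by rewrite !ffunE eq_sym (negPf su) scale_regE mulr0.
Qed.

Lemma sum_neq0_ex (I : finType) (P : pred I) (G : I -> F) :
  \sum_(i | P i) G i != 0 -> exists i, P i && (G i != 0).
Proof.
move=> nz; apply/existsP; apply: contraR nz; rewrite negb_exists => /forallP h.
by apply/eqP/big1 => i Pi; move: (h i); rewrite Pi /= negbK => /eqP.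
Qed.

Definition lext (f : {set T} -> chain) (c : chain) : chain :=
  \sum_(s : {set T}) c s *: f s.

Lemma lextE f c u : lext f c u = \sum_(s : {set T}) c s * f s u.
Proof. by rewrite /lext sum_ffunE; apply: eq_bigr => s _; rewrite ffunE. Qed.

Lemma lext_is_linear f : linear (lext f).
Proof.
move=> a c1 c2; apply/ffunP => u; rewrite !ffunE !lextE.
rewrite scaler_sumr -big_split /=.
by apply: eq_bigr => s _; rewrite !ffunE mulrDl -!mulrA.
Qed.

HB.instance Definition _ f :=
  GRing.isLinear.Build _ _ _ _ (lext f) (lext_is_linear f).

Lemma lext_basis f s : lext f (basis s) = f s.
Proof.
rewrite /lext (bigD1 s) //= big1 => [|t ts]; first by rewrite basisE eqxx scale1r addr0.
by rewrite basisE (negPf ts) scale0r.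
Qed.

Definition supported (P : pred {set T}) (c : chain) := forall s, c s != 0 -> P s.

Lemma supported0 P : supported P 0.
Proof. by move=> s; rewrite ffunE eqxx. Qed.

Lemma supportedD P c1 c2 : supported P c1 -> supported P c2 -> supported P (c1 + c2).
Proof.
move=> h1 h2 s; rewrite ffunE; have [/eqP->|/h1 //] := boolP (c1 s == 0).
by rewrite add0r => /h2.
Qed.

Lemma supportedN P c : supported P c -> supported P (- c).
Proof. by move=> h s; rewrite ffunE oppr_eq0 => /h. Qed.

Lemma supportedS P Q c : {subset P <= Q} -> supported P c -> supported Q c.
Proof. by move=> PQ h s /h /PQ. Qed.

Lemma supported_lext (P Q : pred {set T}) f c :
  supported P c -> (forall s, P s -> supported Q (f s)) -> supported Q (lext f c).
Proof.
move=> Pc Pf u; rewrite lextE => nz; have [//|Qu] := boolP (Q u).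
suff: \sum_s c s * f s u = 0 by move/eqP; rewrite (negPf nz).
apply/big1 => s _; have [/eqP->|/Pc/Pf Qs] := boolP (c s == 0); first by rewrite mul0r.
have [/eqP->|/Qs] := boolP (f s u == 0); first by rewrite mulr0.
by rewrite (negPf Qu).
Qed.

Lemma eq_lext_supported (P : pred {set T}) f g c :
  supported P c -> (forall s, P s -> f s = g s) -> lext f c = lext g c.
Proof.
move=> Pc fg; rewrite /lext; apply: eq_bigr => s _.
by have [/eqP->|/Pc/fg->] := boolP (c s == 0); rewrite ?scale0r.
Qed.

Definition index_in (s : {set T}) (x : T) : nat :=
  #|[set y in s | (enum_rank y < enum_rank x)%N]|.

Lemma cards_filter_setU1 (w : T) (A : {set T}) (P : pred T) : w \notin A ->
  #|[set y in w |: A | P y]| = (P w + #|[set y in A | P y]|)%N.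
Proof.
move=> wA; have [Pw|Pw] := boolP (P w).
  rewrite (_ : [set y in w |: A | P y] = w |: [set y in A | P y]).
    by rewrite cardsU1 inE (negPf wA).
  by apply/setP => y; rewrite !inE; case: eqP => [->|]; rewrite ?Pw.
rewrite (_ : [set y in w |: A | P y] = [set y in A | P y]) //.
by apply/setP => y; rewrite !inE; case: eqP => [->|]; rewrite ?(negPf Pw) ?andbF.
Qed.

Lemma index_in_setU1 (v : T) (s : {set T}) (x : T) : v \notin s ->
  index_in (v |: s) x = (index_in s x + (enum_rank v < enum_rank x))%N.
Proof. by move=> vs; rewrite /index_in cards_filter_setU1 // addnC. Qed.

Lemma index_in_setU1D1 (v : T) (s : {set T}) (x : T) : x \in s -> v \notin s ->
  index_in (v |: s) v = (index_in (v |: (s :\ x)) v + (enum_rank x < enum_rank v))%N.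
Proof.
move=> xs vs; rewrite /index_in !cards_filter_setU1 ?ltnn //; last first.
  by rewrite inE negb_and vs orbT.
rewrite -{1}(finset.setD1K xs) cards_filter_setU1 ?finset.setD11 //.
by rewrite !add0n addnC.
Qed.

Lemma enum_rank_ltn_sum (x v : T) : x != v ->
  ((enum_rank x < enum_rank v) + (enum_rank v < enum_rank x))%N = 1%N.
Proof.
move=> xv; have : enum_rank x != enum_rank v by rewrite (inj_eq enum_rank_inj).
by rewrite neq_ltn => /orP[] h; rewrite h ltnNge ltnW.
Qed.

Definition bd_simplex (s : {set T}) : chain :=
  \sum_(x in s) (-1) ^+ index_in s x *: basis (s :\ x).

(* The augmented boundary: unlike [bd] it sends a vertex to the empty
   simplex, which makes every cone acyclic in all degrees. *)
Local Notation abd := (lext bd_simplex).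

Definition cone_simplex (v : T) (s : {set T}) : chain :=
  (-1) ^+ index_in (v |: s) v *: basis (v |: s).

Local Notation cone v := (lext (cone_simplex v)).

Definition avoids (v : T) := [pred s : {set T} | v \notin s].

Lemma bd_simplex_neq0 s u : bd_simplex s u != 0 -> exists2 x, x \in s & u = s :\ x.
Proof.
rewrite /bd_simplex sum_ffunE => /sum_neq0_ex [x /andP[xs nz]].
move: nz; rewrite ffunE basisE scale_regE.
by case: (u =P s :\ x) => [->|_] nz; [exists x | rewrite mulr0 eqxx in nz].
Qed.

Lemma supported_avoids_abd v c : supported (avoids v) c -> supported (avoids v) (abd c).
Proof.
move=> h; apply: (supported_lext h) => s vs u /bd_simplex_neq0 [x xs ->].
by rewrite inE !inE negb_and (negPf vs) orbT.
Qed.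

Lemma coneE v (c : chain) u : supported (avoids v) c ->
  cone v c u = if v \in u then (-1) ^+ index_in u v * c (u :\ v) else 0.
Proof.
move=> vc; rewrite lextE; case: ifP => vu.
  rewrite (bigD1 (u :\ v)) //= big1 => [|s su].
    by rewrite /cone_simplex ffunE basisE finset.setD1K // eqxx scale_regE mulr1 addr0 mulrC.
  rewrite /cone_simplex ffunE basisE scale_regE.
  have [/eqP->|/vc vs] := boolP (c s == 0); first by rewrite mul0r.
  case: eqP => [us|_]; last by rewrite !mulr0.
  by move: su; rewrite us finset.setU1K // eqxx.
apply: big1 => s _; rewrite /cone_simplex ffunE basisE scale_regE.
case: eqP => [us|_]; last by rewrite !mulr0.
by move: vu; rewrite us finset.setU11.
Qed.

Lemma cone_simplex_homotopy (v : T) (s : {set T}) : v \notin s ->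
  abd (cone_simplex v s) + cone v (bd_simplex s) = basis s.
Proof.
move=> vs; rewrite /cone_simplex linearZ /= lext_basis /bd_simplex big_setU1 //=.
rewrite finset.setU1K // linear_sum /= scalerDr addrAC signrZK.
rewrite -[RHS]addr0 -addrA; congr (_ + _).
rewrite scaler_sumr -big_split /=; apply: big1 => x xs.
have xv : x != v by apply: contraNneq vs => <-.
rewrite linearZ /= lext_basis /cone_simplex scalerA scalerA.
have -> : (v |: s) :\ x = v |: (s :\ x).
  apply/setP => y; rewrite !inE.
  by case: (y =P v) => [->|_] /=; first by rewrite andbT eq_sym.
rewrite -scalerDl (index_in_setU1 x vs) (index_in_setU1D1 xs vs) -!exprD.
set a := index_in _ v; set p := index_in s x.
(* Exactly one of the two rank comparisons holds, so the two signs differ. *)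
have -> : (a + (enum_rank x < enum_rank v) + (p + (enum_rank v < enum_rank x)))%N
          = (p + a).+1 by rewrite addnACA enum_rank_ltn_sum // addn1 addnC.
by rewrite exprS mulN1r addrN scale0r.
Qed.

Lemma cone_homotopy v c : supported (avoids v) c -> abd (cone v c) + cone v (abd c) = c.
Proof.
move=> vc; have -> : cone v c = \sum_s c s *: cone_simplex v s by [].
have -> : abd c = \sum_s c s *: bd_simplex s by [].
rewrite {3}(chainE c) !linear_sum -big_split /=; apply: eq_bigr => s _.
rewrite !linearZ /= -scalerDr.
have [/eqP->|/vc vs] := boolP (c s == 0); first by rewrite !scale0r.
by congr (_ *: _); rewrite -(cone_simplex_homotopy vs) /cone_simplex linearZ.
Qed.

Section Split.
Variables (v : T) (z : chain).

Definition avoiding_part : chain := [ffun s : {set T} => if v \in s then 0 else z s].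

Definition link_part : chain :=
  [ffun s : {set T} => if v \in s then 0 else (-1) ^+ index_in (v |: s) v * z (v |: s)].

Lemma supported_avoiding_part : supported (avoids v) avoiding_part.
Proof. by move=> s; rewrite ffunE inE; case: (v \in s); rewrite ?eqxx. Qed.

Lemma supported_link_part : supported (avoids v) link_part.
Proof. by move=> s; rewrite ffunE inE; case: (v \in s); rewrite ?eqxx. Qed.

Lemma chain_split : z = avoiding_part + cone v link_part.
Proof.
apply/ffunP => u; rewrite ffunE (coneE _ supported_link_part) !ffunE.
case: ifP => vu; last by rewrite addr0.
by rewrite finset.setD11 finset.setD1K // signrMK add0r.
Qed.

(* Evaluate the homotopy identity on simplices avoiding v, resp. containing v. *)
Lemma cycle_split : abd z = 0 ->
  abd avoiding_part + link_part = 0 /\ abd link_part = 0.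
Proof.
move=> bz; have yv := supported_link_part.
have h : abd avoiding_part + link_part - cone v (abd link_part) = 0.
  have hy : abd (cone v link_part) = link_part - cone v (abd link_part).
    by apply/eqP; rewrite eq_sym subr_eq (cone_homotopy yv).
  by rewrite -addrA -hy -linearD /= -chain_split.
have w0 : abd avoiding_part + link_part = 0.
  have wv : supported (avoids v) (abd avoiding_part + link_part).
    exact: supportedD (supported_avoids_abd supported_avoiding_part) yv.
  apply/ffunP => u; rewrite [RHS]ffunE; have [vu|vu] := boolP (v \in u).
    by apply/eqP/negPn/negP => /wv; rewrite inE vu.
  move/ffunP: h => /(_ u); rewrite !ffunE (coneE _ (supported_avoids_abd yv)).
  by rewrite (negPf vu) subr0.
split => //; move: h; rewrite w0 sub0r => /eqP; rewrite oppr_eq0 => /eqP h.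
apply/ffunP => u; rewrite [RHS]ffunE; have [vu|vu] := boolP (v \in u).
  by apply/eqP/negPn/negP => /(supported_avoids_abd yv); rewrite inE vu.
move/ffunP: h => /(_ (v |: u)); rewrite !ffunE (coneE _ (supported_avoids_abd yv)).
rewrite finset.setU11 finset.setU1K // => /eqP.
by rewrite mulf_eq0 signr_eq0 /= => /eqP.
Qed.

End Split.

(** * Acyclicity of small flag complexes *)

Section Flag.
Variable E : rel T.

Definition clique (s : {set T}) := [forall x in s, forall y in s, E x y].

Definition flag : {set {set T}} := [set s | (s != finset.set0) && clique s].

Lemma cliqueP (s : {set T}) :
  reflect (forall x y, x \in s -> y \in s -> E x y) (clique s).
Proof.
apply: (iffP forall_inP) => [h x y xs ys|h x xs].
  by move/forall_inP: (h x xs) => /(_ y ys).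
by apply/forall_inP => y ys; apply: h.
Qed.

Lemma cliqueS (s s' : {set T}) : s' \subset s -> clique s -> clique s'.
Proof.
move=> /fintype.subsetP ss /cliqueP h; apply/cliqueP => x y /ss xs /ss ys.
exact: h.
Qed.

Definition clique_on (V : {set T}) (j : nat) : pred {set T} :=
  fun s => [&& s \subset V, clique s & #|s| == j.+1].

Definition acyclic_on (j : nat) (V : {set T}) :=
  forall z, supported (clique_on V j) z -> abd z = 0 ->
  exists2 e, supported (clique_on V j.+1) e & abd e = z.

Lemma clique_onS (V V' : {set T}) j : V \subset V' -> {subset clique_on V j <= clique_on V' j}.
Proof.
move=> VV' s /and3P[sV cl cs]; apply/and3P; split => //.
exact: fintype.subset_trans VV'.
Qed.

Definition nbhd (V : {set T}) (v : T) := [set x in V | (x != v) && E v x].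

Lemma nbhd_sub (V : {set T}) (v : T) : nbhd V v \subset V :\ v.
Proof. by apply/fintype.subsetP => x; rewrite !inE => /andP[-> /andP[-> _]]. Qed.

Lemma supported_clique_on_avoids (V : {set T}) v j c :
  v \notin V -> supported (clique_on V j) c -> supported (avoids v) c.
Proof.
move=> vV cV s /cV /and3P[sV _ _]; rewrite inE.
by apply: contra vV; apply: (fintype.subsetP sV).
Qed.

Lemma supported_avoiding_part_clique_on (V : {set T}) v j z :
  supported (clique_on V j) z -> supported (clique_on (V :\ v) j) (avoiding_part v z).
Proof.
move=> zV s; rewrite ffunE; case: ifP => vs; first by rewrite eqxx.
move=> /zV /and3P[sV cl cs]; apply/and3P; split => //.
apply/fintype.subsetP => x xs; rewrite !inE (fintype.subsetP sV) // andbT.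
by apply: contraFneq vs => <-.
Qed.

Hypotheses (Erefl : reflexive E) (Esym : symmetric E).

Lemma clique_setU1 (v : T) (s : {set T}) :
  clique s -> (forall x, x \in s -> E v x) -> clique (v |: s).
Proof.
move=> /cliqueP h hv; apply/cliqueP => x y; rewrite !inE.
case/orP => [/eqP->|xs]; case/orP => [/eqP->|ys] //; first exact: hv.
  by rewrite Esym; apply: hv.
exact: h.
Qed.

Lemma supported_cone (V W : {set T}) (v : T) j c :
  supported (clique_on W j) c -> v \notin W -> W \subset V -> v \in V ->
  (forall x, x \in W -> E v x) -> supported (clique_on V j.+1) (cone v c).
Proof.
move=> cW vW WV vV hv u.
rewrite (coneE _ (supported_clique_on_avoids vW cW)); case: ifP => vu; last by rewrite eqxx.
rewrite mulf_eq0 negb_or signr_eq0 /= => /cW /and3P[sW cl /eqP cs].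
rewrite -(finset.setD1K vu); apply/and3P; split.
- rewrite finset.subUset finset.sub1set vV /=; exact: fintype.subset_trans WV.
- by apply: clique_setU1 => // x /(fintype.subsetP sW); apply: hv.
- by rewrite cardsU1 finset.setD11 cs.
Qed.

Lemma supported_link_part_clique_on (V : {set T}) (v : T) j z :
  supported (clique_on V j.+1) z -> supported (clique_on (nbhd V v) j) (link_part v z).
Proof.
move=> zV s; rewrite ffunE; case: ifP => vs; first by rewrite eqxx.
rewrite mulf_eq0 negb_or signr_eq0 /= => /zV /and3P[sV cl cs].
apply/and3P; split.
- apply/fintype.subsetP => x xs; rewrite !inE.
  have xv : x != v by apply: contraFneq vs => <-.
  rewrite xv (fintype.subsetP sV) /= ?inE ?xs ?orbT //.
  by move/cliqueP: cl; apply; rewrite !inE ?eqxx ?xs ?orbT.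
- by apply: cliqueS cl; apply: finset.subsetUr.
- by move: cs; rewrite cardsU1 vs.
Qed.

Lemma acyclic_cone (V : {set T}) (v : T) j :
  v \in V -> (forall x, x \in V -> E v x) -> acyclic_on j V.
Proof.
move=> vV hv z zV bz; have [w0 _] := cycle_split v bz.
exists (cone v (avoiding_part v z)).
  apply: (supported_cone (supported_avoiding_part_clique_on (v:=v) zV)) => //.
  - by rewrite finset.setD11.
  - exact: subD1set.
  - by move=> x /setD1P[_ /hv].
have -> : abd (cone v (avoiding_part v z))
          = avoiding_part v z - cone v (abd (avoiding_part v z)).
  by apply/eqP; rewrite eq_sym subr_eq (cone_homotopy (@supported_avoiding_part v z)).
have -> : abd (avoiding_part v z) = - link_part v z.
  by apply/eqP; rewrite -subr_eq0 opprK w0.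
by rewrite linearN /= opprK -chain_split.
Qed.

(* If c fills the link part of z, then z + abd (cone v c) = avoiding_part v z + c
   is a cycle on V :\ v. *)
Lemma acyclic_link_deletion (V : {set T}) (v : T) j : v \in V ->
  acyclic_on j (nbhd V v) -> acyclic_on j.+1 (V :\ v) -> acyclic_on j.+1 V.
Proof.
move=> vV AN AV z zV bz; have [w0 by0] := cycle_split v bz.
have [c cN bc] := AN _ (supported_link_part_clique_on (v:=v) zV) by0.
have wV : supported (clique_on (V :\ v) j.+1) (avoiding_part v z + c).
  apply: supportedD; first exact: supported_avoiding_part_clique_on.
  exact: supportedS (clique_onS (j:=j.+1) (nbhd_sub V v)) cN.
have bw : abd (avoiding_part v z + c) = 0 by rewrite linearD /= bc.
have [e eV be] := AV _ wV bw.
have vN : v \notin nbhd V v by rewrite !inE eqxx /= andbF.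
exists (e - cone v c).
  apply: supportedD; first exact: supportedS (clique_onS (j:=j.+2) (subD1set V v)) eV.
  apply/supportedN/(supported_cone cN) => //.
  - exact: fintype.subset_trans (nbhd_sub V v) (subD1set V v).
  - by move=> x; rewrite !inE => /andP[_ /andP[]].
rewrite linearB /= be.
have -> : abd (cone v c) = c - cone v (link_part v z).
  apply/eqP; rewrite eq_sym subr_eq -bc.
  by rewrite (cone_homotopy (supported_clique_on_avoids vN cN)).
by rewrite opprB addrA addrAC addrK -chain_split.
Qed.

Lemma acyclic_set0 j : acyclic_on j finset.set0.
Proof.
move=> z zV _; exists 0; first exact: supported0.
rewrite linear0; apply/ffunP => s; rewrite ffunE.
apply/esym/eqP/negPn/negP => /zV /and3P[s0 _].
by move: s0; rewrite finset.subset0 => /eqP->; rewrite cards0.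
Qed.

Lemma acyclic_small (V : {set T}) j : (#|V| <= j.*2.+1)%N -> acyclic_on j V.
Proof.
have [n] := ubnP #|V|; elim: n V j => [|n IH] V j; first by rewrite ltn0.
move=> Vn Vj.
have [->|/set0Pn [v vV]] := eqVneq V finset.set0; first exact: acyclic_set0.
have [hv|] := boolP [forall x in V, E v x].
  by apply: (acyclic_cone vV) => x xV; move/forall_inP: hv; apply.
rewrite negb_forall_in => /existsP [u /andP[uV nvu]].
have uv : u != v by apply: contraNneq nvu => ->.
have cV := cardsD1 v V; rewrite vV in cV.
have cV' := cardsD1 u (V :\ v); rewrite !inE uv uV in cV'.
have cN : (#|nbhd V v| <= #|V :\ v :\ u|)%N.
  apply: subset_leq_card; apply/fintype.subsetP => x; rewrite !inE.
  case/andP=> xV /andP[xv Evx]; rewrite xV xv andbT /= andbT.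
  by apply: contraNneq nvu => <-.
case: j Vj => [|j] Vj; first by move: Vj cV cV'; lia.
by apply: (acyclic_link_deletion vV); apply: IH; lia.
Qed.

End Flag.

Lemma eq_flag (E E' : rel T) : E =2 E' -> flag E = flag E'.
Proof.
move=> EE'; apply/setP => s; rewrite !inE; congr andb.
by apply: eq_forallb => x; congr (_ ==> _); apply: eq_forallb => y; rewrite EE'.
Qed.

(** * Homology of flag complexes on 2k+2 vertices *)

Lemma incid_bd_simplex (s u : {set T}) : (2 <= #|s|)%N -> incid F s u = bd_simplex s u.
Proof.
move=> s2; rewrite /incid /bd_simplex sum_ffunE.
have [/exists_inP [x xs /eqP ->]|nx] := boolP [exists x in s, u == s :\ x].
  have eD : s :\: (s :\ x) = [set x].
    apply/setP => y; rewrite !inE; case: (y =P x) => [->|]; rewrite ?xs //=.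
    by move=> _; rewrite andNb.
  have n0 : s :\ x != finset.set0.
    by rewrite -cards_eq0; have := cardsD1 x s; rewrite xs; move: s2; lia.
  rewrite subD1set eD cards1 n0 /= big_set1.
  rewrite (bigD1 x) //= big1 => [|y /andP[ys yx]]; last first.
    rewrite ffunE basisE scale_regE; case: eqP => [e|_]; last by rewrite mulr0.
    have : x \in s :\ y by rewrite !inE xs andbT eq_sym.
    by rewrite -e finset.setD11.
  by rewrite ffunE basisE eqxx scale_regE mulr1 addr0.
rewrite [RHS]big1 => [|x xs]; last first.
  rewrite ffunE basisE scale_regE; case: eqP => [e|_]; last by rewrite mulr0.
  by move/negP: nx; case; apply/exists_inP; exists x => //; apply/eqP.
case: ifP => // /and3P[us /cards1P [x ex] _]; move/negP: nx; case.
have xsu : x \in s :\: u by rewrite ex set11.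
have xs : x \in s by move: xsu; rewrite inE => /andP[].
apply/exists_inP; exists x => //; apply/eqP/setP => y; rewrite !inE.
have [yu|yu] := boolP (y \in u).
  rewrite (fintype.subsetP us) // andbT; apply/esym/eqP => yx.
  by move: xsu; rewrite inE -yx yu.
have [ys|ys] := boolP (y \in s); rewrite ?andbF // andbT.
have : y \in s :\: u by rewrite inE yu ys.
by rewrite ex inE => /eqP ->; rewrite eqxx.
Qed.

Lemma bd_funE : @bd_fun F T =1 lext (fun s => [ffun u => incid F s u]).
Proof.
by move=> c; apply/ffunP => u; rewrite ffunE lextE; apply: eq_bigr => s _; rewrite ffunE.
Qed.

Lemma bd_fun_is_linear : linear (@bd_fun F T).
Proof. by move=> a c1 c2; rewrite !bd_funE linearP. Qed.

HB.instance Definition _ := GRing.isLinear.Build _ _ _ _ (@bd_fun F T) bd_fun_is_linear.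

Lemma bdE c : bd F T c = bd_fun c.
Proof. exact: lfunE. Qed.

Lemma bd_abd c : supported (fun s => (2 <= #|s|)%N) c -> bd F T c = abd c.
Proof.
move=> h; rewrite bdE bd_funE; apply: (eq_lext_supported h) => s s2.
by apply/ffunP => u; rewrite ffunE incid_bd_simplex.
Qed.

Lemma chainsP k (K : {set {set T}}) c :
  reflect (supported (fun s => (s \in K) && (#|s| == k.+1)) c) (c \in chains F k K).
Proof.
set X := [seq basis s | s <- enum [set s in K | #|s| == k.+1]].
apply: (iffP idP) => [hc|hs].
  have e := @coord_span _ _ _ (in_tuple X) c hc.
  move=> s; rewrite e sum_ffunE => /sum_neq0_ex [i /andP[_]].
  rewrite ffunE scale_regE mulf_eq0 negb_or => /andP[_].
  have : X`_i \in X by apply: mem_nth; rewrite -{2}(size_tuple (in_tuple X)).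
  case/mapP => t; rewrite mem_enum inE => /andP[tK tc] ->.
  by rewrite basisE; case: (s =P t) => [->|_]; rewrite ?eqxx // tK.
rewrite (chainE c); apply: rpred_sum => s _.
have [/eqP->|/hs /andP[sK sc]] := boolP (c s == 0); first by rewrite scale0r mem0v.
by apply/rpredZ/memv_span/map_f; rewrite mem_enum inE sK.
Qed.

Lemma homology_flag_vanish (E : rel T) k : (0 < k)%N ->
  acyclic_on E k [set: T] -> homology_dim F k (flag E) = 0%N.
Proof.
move=> k0 A; apply/eqP; rewrite subn_eq0; apply: dimvS.
apply/subvP => z /memv_capP [/chainsP zc]; rewrite memv_ker => /eqP bz.
have zP : supported (clique_on E [set: T] k) z.
  move=> s /zc; rewrite inE => /andP[/andP[_ cl] cs].
  by rewrite /clique_on finset.subsetT cl cs.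
have bz' : abd z = 0 by rewrite -bz bd_abd // => s /zc /andP[_ /eqP ->]; lia.
have [e eP be] := A _ zP bz'.
apply/memv_imgP; exists e.
  apply/chainsP => s /eP /and3P[_ cl cs]; rewrite inE cl cs andbT /= -cards_eq0.
  by rewrite (eqP cs).
by rewrite bd_abd // => s /eP /and3P[_ _ /eqP ->]; lia.
Qed.

Lemma flag_homology_non_neighbour (E : rel T) k v :
  reflexive E -> symmetric E -> (0 < k)%N ->
  homology_dim F k (flag E) != 0%N -> exists u, ~~ E v u.
Proof.
move=> Erefl Esym k0 hk; apply/existsP; rewrite -negb_forall; apply: contra hk.
move=> /forallP hv; rewrite homology_flag_vanish //.
by apply: (acyclic_cone Erefl Esym (finset.in_setT v)) => x _; apply: hv.
Qed.

Lemma flag_homology_non_neighbour_unique (E : rel T) k v u1 u2 :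
  reflexive E -> symmetric E -> (0 < k)%N -> (#|T| <= k.*2.+2)%N ->
  homology_dim F k (flag E) != 0%N -> ~~ E v u1 -> ~~ E v u2 -> u1 = u2.
Proof.
move=> Erefl Esym k0 cT hk n1 n2; apply/eqP; apply: contraNT hk => u12.
rewrite homology_flag_vanish //; case: k k0 cT => // j _ cT.
have u1v : u1 != v by apply: contraNneq n1 => ->.
have u2v : u2 != v by apply: contraNneq n2 => ->.
have c1 := cardsD1 v [set: T]; rewrite finset.in_setT finset.cardsT in c1.
have c2 := cardsD1 u1 ([set: T] :\ v); rewrite !inE u1v /= in c2.
have c3 := cardsD1 u2 ([set: T] :\ v :\ u1); rewrite !inE u2v eq_sym u12 /= in c3.
have cN : (#|nbhd E [set: T] v| <= #|[set: T] :\ v :\ u1 :\ u2|)%N.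
  apply: subset_leq_card; apply/fintype.subsetP => w; rewrite !inE.
  case/and3P=> _ wv Evw; rewrite wv /= andbT.
  by apply/andP; split; apply/eqP => e; [move: n2 | move: n1]; rewrite -e Evw.
apply: (acyclic_link_deletion Erefl Esym (finset.in_setT v)); apply: acyclic_small => //; lia.
Qed.

Lemma homology_dim0_ge2 (K : {set {set T}}) (x y : T) : x != y ->
  [set x] \in K -> [set y] \in K -> (forall s, s \in K -> #|s| != 2%N) ->
  (2 <= homology_dim F 0 K)%N.
Proof.
move=> xy xK yK no_edge.
have no_1chains : chains F 1 K = 0%VS.
  apply/eqP; rewrite -subv0; apply/subvP => c /chainsP hc; rewrite memv0.
  apply/eqP/ffunP => s; rewrite ffunE; apply/eqP/negPn/negP.
  by move=> /hc /andP[/no_edge /negPf ->].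
rewrite /homology_dim /boundaries no_1chains limg0 dimv0 subn0.
have cyc w : [set w] \in K -> basis [set w] \in cycles F 0 K.
  move=> wK; rewrite memv_cap memv_ker.
  have -> : bd F T (basis [set w]) = 0.
    rewrite bdE bd_funE lext_basis; apply/ffunP => u; rewrite !ffunE /incid.
    case: ifP => // /and3P[us /eqP c1 u0]; move: c1.
    rewrite cardsD (finset.setIidPr us) cards1.
    by move: u0; rewrite -cards_eq0; case: #|u| => [|[|n]].
  rewrite eqxx andbT; apply/chainsP => s; rewrite ffunE.
  by case: (s =P [set w]) => [->|]; rewrite ?eqxx // wK cards1.
have sub : (<<[:: basis [set x]; basis [set y]]>> <= cycles F 0 K)%VS.
  by apply/span_subvP => w; rewrite !inE => /orP[] /eqP ->; apply: cyc.
apply: leq_trans (dimvS sub).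
have basis_neq0 w : basis [set w] != 0.
  by apply/eqP => /ffunP /(_ [set w]); rewrite !ffunE eqxx; apply/eqP; rewrite oner_eq0.
have dis : (<[basis [set x]]> :&: <[basis [set y]]> = 0)%VS.
  apply/eqP; rewrite -subv0; apply/subvP => w.
  move=> /memv_capP [/vlineP [k1 ->] /vlineP [k2 /ffunP /(_ [set x])]].
  rewrite memv0 !ffunE eqxx.
  have -> : ([set x] == [set y]) = false.
    by apply/negbTE; rewrite eqEcard !finset.sub1set !inE (negPf xy).
  rewrite scale_regE mulr1 (_ : false%:R = 0 :> F) // scale_regE mulr0 => ->.
  by rewrite scale0r.
by rewrite span_cons span_seq1 dimv_disjoint_sum // !dim_vline !basis_neq0.
Qed.

Lemma flag_H0_complete (E : rel T) : reflexive E -> #|T| = 2%N ->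
  homology_dim F 0 (flag E) = 1%N -> forall x y, E x y.
Proof.
move=> Erefl cT h x y; have [<-|xy] := eqVneq x y; first exact: Erefl.
apply/negPn/negP => nExy.
have set1_flag w : [set w] \in flag E.
  rewrite inE -cards_eq0 cards1 /=.
  by apply/cliqueP => p q; rewrite !inE => /eqP-> /eqP->; apply: Erefl.
suff: (2 <= homology_dim F 0 (flag E))%N by rewrite h.
apply: (homology_dim0_ge2 xy (set1_flag x) (set1_flag y)) => s.
rewrite inE => /andP[_ /cliqueP cl]; apply/eqP => s2.
have sT : s = [set: T] by apply/eqP; rewrite eqEcard finset.subsetT finset.cardsT cT s2.
have := cl x y; rewrite sT !inE => /(_ isT isT) Exy.
by rewrite Exy in nExy.
Qed.

Lemma flag_top_homology_rigid (E E' : rel T) k :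
  reflexive E -> symmetric E -> reflexive E' -> symmetric E' -> subrel E E' ->
  #|T| = (2 * k + 2)%N ->
  homology_dim F k (flag E) = 1%N -> homology_dim F k (flag E') = 1%N -> E =2 E'.
Proof.
move=> Erefl Esym Erefl' Esym' EE' cT hE hE' x y.
apply/idP/idP => [/EE' //|E'xy].
case: k cT hE hE' => [|k] cT hE hE'; first exact: (flag_H0_complete Erefl cT hE).
have hE0 : homology_dim F k.+1 (flag E) != 0%N by rewrite hE.
have hE0' : homology_dim F k.+1 (flag E') != 0%N by rewrite hE'.
have [u nE'xu] := flag_homology_non_neighbour x Erefl' Esym' (ltn0Sn k) hE0'.
apply/negPn/negP => nExy.
have nExu : ~~ E x u := contra (EE' x u) nE'xu.
have cT' : (#|T| <= k.+1.*2.+2)%N by rewrite cT; lia.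
have yu := flag_homology_non_neighbour_unique Erefl Esym (ltn0Sn k) cT' hE0 nExy nExu.
by rewrite -yu E'xy in nE'xu.
Qed.

Lemma induced_iso_refl k (K : {set {set T}}) : induced_iso F k K K.
Proof. by rewrite /induced_iso capvSr addvSl. Qed.

End Chains.

(** * Rips complexes of a dynamic metric space *)

Section Rips.
Variables (R : realType) (T : finType).

Definition rips_rel (m : T -> T -> R) (delta : R) : rel T := fun x y => m x y <= delta.

Lemma rips_flag (m : T -> T -> R) (delta : R) : rips m delta = flag (rips_rel m delta).
Proof.
apply/setP => s; rewrite !inE; congr andb; apply: eq_forallb => x; congr (_ ==> _).
by apply: eq_forallb => y; rewrite asboolb.
Qed.

Variable d : R -> T -> T -> R.
Hypothesis hd : forall t, is_pseudometric (d t).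

Lemma dI_le a b x y t : t \in `[a, b] -> dI d a b x y <= d t x y.
Proof.
move=> tI; apply: ge_inf; last by exists t.
by exists 0 => r [s _ <-]; case: (hd s) => h0 _ _ _; apply: h0.
Qed.

Lemma dI_sym a b x y : dI d a b x y = dI d a b y x.
Proof.
rewrite /dI; congr inf; apply/seteqP; split => r [t tI <-]; exists t => //;
  by case: (hd t) => _ _ h _; apply: h.
Qed.

Lemma dI_le_subitv a b a' b' x y : a <= b -> a' <= a -> b <= b' ->
  dI d a' b' x y <= dI d a b x y.
Proof.
move=> ab a'a bb'; apply: lb_le_inf.
  by exists (d a x y), a => //; rewrite /= in_itv /= lexx ab.
move=> r [t tI <-]; apply: dI_le.
move: tI; rewrite /= !in_itv /= => /andP[h1 h2].
by rewrite (le_trans a'a h1) (le_trans h2 bb').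
Qed.

Lemma rips_dI_refl a b delta : a <= b -> 0 <= delta -> reflexive (rips_rel (dI d a b) delta).
Proof.
move=> ab d0 x; have [_ dxx _ _] := hd a.
have aI : a \in `[a, b] by rewrite in_itv /= lexx ab.
by apply: le_trans (dI_le x x aI) _; rewrite dxx.
Qed.

Lemma rips_dI_sym a b delta : symmetric (rips_rel (dI d a b) delta).
Proof. by move=> x y; rewrite /rips_rel dI_sym. Qed.

Lemma rips_dI_subrel a b delta a' b' delta' :
  a <= b -> a' <= a -> b <= b' -> delta <= delta' ->
  subrel (rips_rel (dI d a b) delta) (rips_rel (dI d a' b') delta').
Proof.
move=> ab a'a bb' dd' x y h.
exact: le_trans (dI_le_subitv x y ab a'a bb') (le_trans h dd').
Qed.

End Rips.

Unset Implicit Arguments.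

Theorem mainTheorem1 (R : realType) (F : fieldType) (k : nat) (T : finType)
  (d : R -> T -> T -> R)
  (hcard : #|T| = (2 * k + 2)%N) (hd : isDMS d)
  (a b delta a' b' delta' : R)
  (hab : a <= b) (hdelta : 0 <= delta)
  (hab' : a' <= b') (hdelta' : 0 <= delta')
  (hpq : [/\ a' <= a, b <= b' & delta <= delta'])
  (hp : homology_dim F k (Rlev d a b delta) = 1%N)
  (hq : homology_dim F k (Rlev d a' b' delta') = 1%N) :
  Rlev d a b delta = Rlev d a' b' delta' /\
  induced_iso F k (Rlev d a b delta) (Rlev d a' b' delta').
Proof.
case: hpq => a'a bb' dd'; have [hpm _] := hd.
rewrite /Rlev !rips_flag in hp hq *.
have eqE : rips_rel (dI d a b) delta =2 rips_rel (dI d a' b') delta'.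
  apply: (flag_top_homology_rigid _ _ _ _ _ hcard hp hq).
  - exact: rips_dI_refl.
  - exact: rips_dI_sym.
  - exact: rips_dI_refl.
  - exact: rips_dI_sym.
  - exact: rips_dI_subrel.
rewrite (eq_flag eqE); split => //; exact: induced_iso_refl.
Qed.
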